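(* Let $x=x[1..n]$ be an indeterminate string with prefix table $\pi[1..n]$. Algorithm PCInd (described in the context), run on input $\pi$, outputs exactly the set $\Gamma$ of lengths $\kappa$ of rooted covers of $x$. It runs in $O(n^2)$ time (unit-cost elementary operations) and uses $O(n)$ extra space.
   Context: An indeterminate string $x=x[1..n]$ over an alphabet $\Sigma$ is a sequence of nonempty subsets of $\Sigma$. Two entries match, $x[i]\approx x[j]$, iff $x[i]\cap x[j]\neq\emptyset$; strings $u,w$ match ($u\approx w$) iff $|u|=|w|$ and $u[k]\approx w[k]$ for all $k$. The prefix table of $x$ is the array $\pi[1..n]$ with $\pi[1]=n$ and, for $i\in 2..n$, $\pi[i]$ the largest $\ell\ge0$ with $x[i..i+\ell-1]\approx x[1..\ell]$. A rooted cover of $x$ of length $\kappa$, $1\le\kappa<n$, is one such that every position $k\in 1..n$ lies in some interval $[p,p+\kappa-1]\subseteq[1,n]$ with $x[p..p+\kappa-1]\approx x[1..\kappa]$ (every covering substring matches the prefix of length $\kappa$; in particular the suffix of length $\kappa$ matches $x[1..\kappa]$). Algorithm PCInd (input $\pi[1..n]$, output a set $\Gamma$): Set $\Gamma\leftarrow\emptyset$, $maxlive[1..n]\leftarrow 0$, $max\leftarrow\max(\pi[2..n])$. Let $\mathcal L$ be the list, in increasing order, of the candidate lengths: the values $\pi[i]$ with $2\le i\le n$, $\pi[i]\ge 1$ and $\pi[i]+i-1=n$ (all of which are $\le max$). For $i=2,\dots,n$: set $\mathcal D\leftarrow\emptyset$ (a stack); for each $v\in\mathcal L$ in increasing order: if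 $v>\pi[i]$, stop scanning $\mathcal L$ for this $i$; otherwise let $t\leftarrow i+v-1$; if ($maxlive[v]=0$ and $t\le 2v$) or $maxlive[v]\ge t-v$ then $maxlive[v]\leftarrow t$, else $maxlive[v]\leftarrow-1$ and push $v$ onto $\mathcal D$. After the scan, pop every element of $\mathcal D$ and delete it from $\mathcal L$. Finally, for $k=1,\dots,n$: if $maxlive[k]=n$, add $k$ to $\Gamma$. Output $\Gamma$. *)

From HB Require Import structures.
From mathcomp Require Import all_boot all_order all_algebra.
Set Implicit Arguments. Unset Strict Implicit. Unset Printing Implicit Defensive.
Import Order.TTheory GRing.Theory Num.Theory.

(** * Indeterminate strings over a finite alphabet [Sigma].
    A string is a [seq {set Sigma}]; positions are 1-based: [xat x i] = x[i]. *)

Section Strings.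
Variable Sigma : finType.
Implicit Types (x : seq {set Sigma}) (a b : {set Sigma}).

Definition indeterminate x : bool := all (fun a => a != set0) x.

Definition xat x (i : nat) : {set Sigma} := nth set0 x i.-1.

Definition imatch a b : bool := a :&: b != set0.

Definition sub_match x (p l : nat) : bool :=
  [forall j : 'I_l, imatch (xat x (p + j)) (xat x (1 + j))].

(** pi[1] = n; for i in 2..n, pi[i] = largest l >= 0 with
    x[i..i+l-1] ~ x[1..l] (the substring must lie inside x, so l <= n-i+1). *)
Definition pi_entry x (i : nat) : nat :=
  if i == 1 then size x
  else \max_(l < (size x - i).+2 | sub_match x i l) l.

(** the prefix table pi[1..n] as a list (entry k-1 holds pi[k]) *)
Definition prefix_table x : seq nat := [seq pi_entry x i | i <- iota 1 (size x)].

Definition rooted_cover x (kappa : nat) : Prop :=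
  (1 <= kappa < size x) /\
  forall k, 1 <= k <= size x ->
    exists p, [/\ 1 <= p, p <= k, k <= p + kappa - 1, p + kappa - 1 <= size x
                & sub_match x p kappa].
End Strings.

(** * Algorithm PCInd, instrumented with a unit-cost operation counter and a
    measure of the extra space used. The input is the table pi as a list
    (entry k-1 = pi[k], n = size of the list). *)

Definition upd (f : nat -> int) (v : nat) (a : int) : nat -> int :=
  fun k => if k == v then a else f k.

Fixpoint pc_scan (i piv : nat) (L : seq nat) (ml : nat -> int) (D : seq nat)
    (cost : nat) : (nat -> int) * seq nat * nat :=
  match L with
  | [::] => (ml, D, cost)
  | v :: L' =>
    if piv < v then (ml, D, cost.+1)
    else
      let t := i + v - 1 in
      if ((ml v == 0%R) && (t <= 2 * v)) || (Posz (t - v) <= ml v)%R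
      then pc_scan i piv L' (upd ml v (Posz t)) D cost.+1
      else pc_scan i piv L' (upd ml v (-1)%R) (v :: D) cost.+1
  end.

(** pop every element of D and delete it from L; deletion is charged
    (conservatively) 1 + |L| operations *)
Fixpoint pc_pop (D L : seq nat) (cost : nat) : seq nat * nat :=
  match D with
  | [::] => (L, cost)
  | v :: D' => pc_pop D' [seq w <- L | w != v] (cost + 1 + size L)
  end.

Fixpoint pc_main (pitab : seq nat) (idx : seq nat) (L : seq nat) (ml : nat -> int)
    (cost peak : nat) : (nat -> int) * nat * nat :=
  match idx with
  | [::] => (ml, cost, peak)
  | i :: idx' =>
    let '(ml', D, c1) := pc_scan i (nth 0 pitab i.-1) L ml [::] cost.+1 in
    let peak' := maxn peak (size L + size D) in
    let '(L', c2) := pc_pop D L c1 in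
    pc_main pitab idx' L' ml' c2 peak'
  end.

Definition pc_candidates (pitab : seq nat) : seq nat :=
  let n := size pitab in
  sort leq [seq nth 0 pitab i.-1 |
            i <- iota 2 n.-1 & (1 <= nth 0 pitab i.-1) && (nth 0 pitab i.-1 + i - 1 == n)].

(** returns (Gamma, number of elementary operations, extra space) ;
    initialisation (maxlive, max, L) is charged 3n, the final loop n;
    extra space = n (maxlive) + peak of |L| + |D| *)
Definition PCInd_run (pitab : seq nat) : seq nat * nat * nat :=
  let n := size pitab in
  let L0 := pc_candidates pitab in
  let '(ml, cost, peak) :=
      pc_main pitab (iota 2 n.-1) L0 (fun _ => 0%R) (3 * n) (size L0) in
  ([seq k <- iota 1 n | ml k == Posz n], cost + n, n + peak).

Definition PCInd (pitab : seq nat) : seq nat := (PCInd_run pitab).1.1.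
Definition PCInd_time (pitab : seq nat) : nat := (PCInd_run pitab).1.2.
Definition PCInd_space (pitab : seq nat) : nat := (PCInd_run pitab).2.

From HB Require Import structures.
From mathcomp Require Import all_boot all_order all_algebra zify.
Set Implicit Arguments. Unset Strict Implicit. Unset Printing Implicit Defensive.

(* Fix a candidate length v and call p an occurrence if x[p..p+v-1] matches x[1..v]
   (position 1 always is one). The test of PCInd accepts the occurrence at i exactly when
   it starts at most v positions after the previous occurrence (or after position 1 if
   there was none), so after positions 2..m-1 the entry maxlive[v] is 0 if no occurrence
   has been seen, j+v-1 for the last occurrence j while no gap of more than v has
   appeared, and -1 forever after the first such gap ([maxlive_spec]). Candidates are
   only deleted from L once their entry is -1, so the algorithm computes this value for
   all of them. A rooted cover of length v is precisely a gap-free chain of occurrences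
   ending with a suffix occurrence, i.e. v is a candidate with final entry n.
   Each index i costs O(|L|) for the scan, each candidate is deleted at most once at
   cost O(n), and L, D are disjoint sublists of the candidates: O(n^2) time, O(n) space. *)

Definition extends_live (i v : nat) (s : int) : bool :=
  ((s == 0%R) && (i + v - 1 <= 2 * v)) || (Posz (i + v - 1 - v) <= s)%R.

Definition maxlive_update (i v : nat) (s : int) : int :=
  if extends_live i v s then Posz (i + v - 1) else (-1)%R.

Definition maxlive_step (pitab : seq nat) (v : nat) (s : int) (i : nat) : int :=
  if v <= nth 0 pitab i.-1 then maxlive_update i v s else s.

Definition maxlive_fold (pitab : seq nat) (v : nat) (idx : seq nat) (s : int) : int :=
  foldl (maxlive_step pitab v) s idx.

Lemma maxlive_fold_dead pitab v idx : maxlive_fold pitab v idx (-1)%R = (-1)%R.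
Proof. by elim: idx => //= i idx IH; rewrite /maxlive_step; case: ifP. Qed.

Lemma pc_scan_spec i piv L ml D cost ml' D' cost' : sorted ltn L ->
  pc_scan i piv L ml D cost = (ml', D', cost') ->
  [/\ forall w, ml' w = if (w \in L) && (w <= piv) then maxlive_update i w (ml w) else ml w,
      D' = rev [seq w <- L | (w <= piv) && ~~ extends_live i w (ml w)] ++ D
    & cost' <= cost + size L].
Proof.
elim: L ml D cost => [|v L IH] ml D cost /=; first by move=> _ [<- <- <-]; rewrite addn0.
rewrite (path_sortedE ltn_trans) => /andP [v_lt sortL].
have vNL : v \notin L by apply/negP => /(allP v_lt); rewrite ltnn.
have piv_ltL w : piv < v -> w \in L -> (w <= piv) = false.
  by move=> lt_piv /(allP v_lt) /= lt_vw; rewrite leqNgt (ltn_trans lt_piv lt_vw).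
case: ltnP => [lt_piv [<- <- <-]|le_v].
  split; last by rewrite addnS ltnS leq_addr.
    move=> w; rewrite in_cons; case: eqVneq => [->|_] /=; first by rewrite leqNgt lt_piv.
    by case wL: (w \in L) => //=; rewrite piv_ltL.
  by rewrite (eq_in_filter (a2 := pred0)) ?filter_pred0 // => w /(piv_ltL _ lt_piv) ->.
have updL a w : w \in L -> upd ml v a w = ml w.
  by move=> wL; rewrite /upd; case: eqP => // E; rewrite -E wL in vNL.
case ext: (_ || _) => /(IH _ _ _ sortL) [ml'E D'E cost'E]; (split; last by lia).
- move=> w; rewrite ml'E in_cons; case: (eqVneq w v) => [->|wNv] /=.
    by rewrite (negbTE vNL) le_v /upd eqxx /maxlive_update /extends_live ext.
  by rewrite /upd (negbTE wNv).
- rewrite D'E /extends_live ext /=; congr (rev _ ++ _).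
  by apply: eq_in_filter => w wL; rewrite updL.
- move=> w; rewrite ml'E in_cons; case: (eqVneq w v) => [->|wNv] /=.
    by rewrite (negbTE vNL) le_v /upd eqxx /maxlive_update /extends_live ext.
  by rewrite /upd (negbTE wNv).
- rewrite D'E /extends_live ext /= rev_cons cat_rcons; congr (rev _ ++ _).
  by apply: eq_in_filter => w wL; rewrite updL.
Qed.

Lemma pc_pop_spec D L cost L' cost' : pc_pop D L cost = (L', cost') ->
  L' = [seq w <- L | w \notin D] /\ cost' <= cost + size D * (size L).+1.
Proof.
elim: D L cost => [|v D IH] L cost /=.
  by case=> <- <-; rewrite filter_predT addn0.
move=> /IH [-> cost'E]; split.
  by rewrite -filter_predI; apply: eq_filter => w; rewrite /= in_cons negb_or andbC.
have : size D * (size [seq w <- L | w != v]).+1 <= size D * (size L).+1.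
  by rewrite leq_mul2l ltnS size_filter count_size orbT.
by move: cost'E; rewrite mulSn; move: (size D * _) (size D * _) => a b; lia.
Qed.

Lemma pc_main_spec pitab N k m L ml cost peak ml' cost' peak' :
  sorted ltn L -> size L <= N ->
  pc_main pitab (iota m k) L ml cost peak = (ml', cost', peak') ->
  [/\ forall w, ml' w = if w \in L then maxlive_fold pitab w (iota m k) (ml w) else ml w,
      cost' <= cost + N.+1 * size L + k * N.+1
    & peak' <= maxn peak (2 * N)].
Proof.
elim: k m L ml cost peak => [|k IH] m L ml cost peak sortL sizeL /=.
  by case=> <- <- <-; split=> [w||]; [case: ifP|lia|lia].
case scanE: pc_scan => [[ml1 D] cost1]; case popE: pc_pop => [L1 cost2].
have [ml1E DE cost1E] := pc_scan_spec sortL scanE.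
have [L1E cost2E] := pc_pop_spec popE.
rewrite cats0 in DE.
set dead := (fun w => _) in DE.
have {}L1E : L1 = [seq w <- L | predC dead w].
  by rewrite L1E DE; apply: eq_in_filter => w wL; rewrite mem_rev mem_filter wL andbT.
have sizeL1D : size L1 + size D = size L.
  by rewrite L1E DE size_rev !size_filter addnC count_predC.
have sortL1 : sorted ltn L1 by rewrite L1E; exact: (sorted_filter ltn_trans).
move=> /(IH _ _ _ _ _ sortL1 ltac:(lia)) [ml'E cost'E peak'E]; split.
- move=> w; rewrite ml'E ml1E; case wL: (w \in L) => /=; last first.
    by rewrite L1E mem_filter wL andbF.
  rewrite /maxlive_step; case wL1: (w \in L1) => //.
  move: wL1; rewrite L1E mem_filter wL andbT /= => /negbFE /andP [-> dead_w].
  by rewrite /maxlive_update (negbTE dead_w) maxlive_fold_dead.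
- apply: leq_trans cost'E _.
  have : size D * (size L).+1 <= N * N.+1 by apply: leq_mul; lia.
  nia.
- by apply: leq_trans peak'E _; lia.
Qed.

Lemma pc_candidates_sorted pitab : sorted ltn (pc_candidates pitab).
Proof.
rewrite ltn_sorted_uniq_leq sort_uniq (sort_sorted leq_total) andbT.
rewrite map_inj_in_uniq ?filter_uniq ?iota_uniq // => i j.
rewrite !mem_filter => /andP [/andP [? /eqP ?] _] /andP [/andP [? /eqP ?] _] /=.
lia.
Qed.

Lemma size_pc_candidates pitab : size (pc_candidates pitab) <= size pitab.
Proof.
rewrite size_sort size_map size_filter.
by apply: leq_trans (count_size _ _) _; rewrite size_iota leq_pred.
Qed.

Lemma mem_pc_candidates pitab v : v \in pc_candidates pitab <->
  exists2 i, 2 <= i <= size pitab &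
    [/\ 1 <= nth 0 pitab i.-1, nth 0 pitab i.-1 + i - 1 = size pitab & v = nth 0 pitab i.-1].
Proof.
rewrite mem_sort; split.
  case/mapP => i; rewrite mem_filter mem_iota => /andP [/andP [pi_gt0 /eqP piE] i_range] ->.
  by exists i; first lia.
case=> i i_range [pi_gt0 piE ->]; apply/mapP; exists i => //.
by rewrite mem_filter mem_iota pi_gt0 piE eqxx /=; lia.
Qed.

Lemma PCInd_run_spec pitab : let n := size pitab in
  [/\ forall v, v \in PCInd pitab <->
        [/\ 1 <= v <= n, v \in pc_candidates pitab
          & maxlive_fold pitab v (iota 2 n.-1) 0%R = Posz n],
      PCInd_time pitab <= 7 * n ^ 2 + 7
    & PCInd_space pitab <= 7 * n + 7].
Proof.
rewrite /PCInd /PCInd_time /PCInd_space /PCInd_run.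
case runE: pc_main => [[ml cost] peak] /=.
have size_cands := size_pc_candidates pitab.
have [mlE costE peakE] := pc_main_spec (pc_candidates_sorted pitab) size_cands runE.
split; last by lia.
- move=> v; rewrite mem_filter mem_iota mlE; case: ifP => candv.
    by split=> [/andP [/eqP -> ?]|[? _ ->]]; [split|rewrite eqxx]; lia.
  by split=> [/andP [/eqP [] ?]|[]]; lia.
- have : (size pitab).+1 * size (pc_candidates pitab) <= (size pitab).+1 * size pitab.
    by rewrite leq_mul2l size_cands orbT.
  by move: costE; rewrite -mulnn; move: (size pitab) (size (pc_candidates pitab)); nia.
Qed.

Section PrefixTable.
Variables (Sigma : finType) (x : seq {set Sigma}).
Local Notation n := (size x).

Lemma sub_match0 i : sub_match x i 0.
Proof. by apply/forallP => -[]. Qed.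

Lemma sub_match_le i l l' : l' <= l -> sub_match x i l -> sub_match x i l'.
Proof.
by move=> le_l /forallP match_l; apply/forallP => j; exact: (match_l (widen_ord le_l j)).
Qed.

Lemma leq_pi_entry i l : 2 <= i <= n ->
  (l <= pi_entry x i) = (l <= n - i + 1) && sub_match x i l.
Proof.
move=> i_range; rewrite /pi_entry ifN; last by case: i i_range => [|[]].
apply/idP/andP => [le_l|[le_l match_l]]; last first.
  by apply: (@leq_bigmax_cond _ _ (fun l : 'I__ => val l) (@Ordinal _ l _)) => //; lia.
have le_max : \max_(l < (n - i).+2 | sub_match x i l) l <= n - i + 1.
  by apply/bigmax_leqP => k _; have := ltn_ord k; lia.
split; first exact: leq_trans le_max.
case: l le_l => [_|l le_l]; first exact: sub_match0.
have [//|Nmatch] := boolP (sub_match x i l.+1).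
suff : \max_(k < (n - i).+2 | sub_match x i k) k <= l by lia.
apply/bigmax_leqP => k match_k; rewrite leqNgt; apply/negP => lt_lk.
by rewrite (sub_match_le lt_lk match_k) in Nmatch.
Qed.

Lemma size_prefix_table : size (prefix_table x) = n.
Proof. by rewrite size_map size_iota. Qed.

Lemma nth_prefix_table i : 1 <= i <= n -> nth 0 (prefix_table x) i.-1 = pi_entry x i.
Proof.
by move=> i_range; rewrite (nth_map 0) ?nth_iota ?size_iota; [congr pi_entry|..]; lia.
Qed.

Lemma sub_match_prefix l : indeterminate x -> l <= n -> sub_match x 1 l.
Proof.
move=> x_indet le_ln; apply/forallP => j; rewrite /imatch setIid /xat add1n /=.
exact: (allP x_indet) (mem_nth set0 (leq_trans (ltn_ord j) le_ln)).
Qed.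

Section Occurrences.
Variable v : nat.

Definition occurs (p : nat) : bool := (p == 1) || (2 <= p <= n) && (v <= pi_entry x p).

Definition gap_free (m : nat) : Prop := forall i, 2 <= i < m -> occurs i ->
  exists2 p, p < i & (i - p <= v) && occurs p.

Definition suffix_occurrence : Prop := exists2 i, 2 <= i & occurs i /\ i + v - 1 = n.

Lemma occurs_gt0 p : occurs p -> 0 < p.
Proof. by case/orP => [/eqP ->|/andP [/andP [p_ge2 _] _]] //; exact: ltnW. Qed.

Lemma occurs_fits p : 2 <= p -> occurs p -> p <= n /\ p + v - 1 <= n.
Proof.
move=> p_ge2 /orP [/eqP p1|/andP [p_range]]; first by rewrite p1 in p_ge2.
by rewrite leq_pi_entry // => /andP [le_v _]; lia.
Qed.

Lemma occurs_sub_match p :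
  indeterminate x -> occurs p -> p + v - 1 <= n -> sub_match x p v.
Proof.
move=> x_indet; case/orP => [/eqP -> le_vn|/andP [p_range]].
  by apply: sub_match_prefix; lia.
by rewrite leq_pi_entry // => /andP [].
Qed.

Lemma gap_free_le m m' : m' <= m -> gap_free m -> gap_free m'.
Proof. by move=> le_m gap i i_range; apply: gap; lia. Qed.

Lemma gap_freeS m : gap_free m ->
  (occurs m -> exists2 p, p < m & (m - p <= v) && occurs p) -> gap_free m.+1.
Proof.
move=> gap gap_m i i_range occ_i; have [lt_im|ge_im] := ltnP i m.
  by apply: gap => //; lia.
have eq_im : i = m by lia.
by rewrite eq_im in occ_i *; apply: gap_m.
Qed.

Inductive maxlive_spec (m : nat) : int -> Prop :=
  | MaxliveNone of gap_free m & (forall i, 2 <= i < m -> ~~ occurs i) : maxlive_spec m 0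
  | MaxliveLast j of gap_free m & 2 <= j < m & occurs j &
      (forall i, j < i < m -> ~~ occurs i) : maxlive_spec m (Posz (j + v - 1))
  | MaxliveDead of ~ gap_free m : maxlive_spec m (-1).

Lemma maxlive_spec_miss m s : ~~ occurs m -> maxlive_spec m s -> maxlive_spec m.+1 s.
Proof.
move=> Nocc_m spec_s.
have gapS : gap_free m -> gap_free m.+1.
  by move=> gap; apply: gap_freeS => // occ_m; rewrite occ_m in Nocc_m.
have Nocc_ltS lo :
    (forall i, lo < i < m -> ~~ occurs i) -> forall i, lo < i < m.+1 -> ~~ occurs i.
  move=> Nocc i i_range; have [lt_im|ge_im] := ltnP i m; first by apply: Nocc; lia.
  by have -> : i = m by lia.
case: spec_s => [gap Nocc|j gap j_range occ_j Nocc|Ngap].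
- by apply: MaxliveNone; [exact: gapS|exact: (Nocc_ltS 1)].
- by apply: MaxliveLast; [exact: gapS|lia|exact: occ_j|exact: Nocc_ltS].
- by apply: MaxliveDead => /(gap_free_le (leqnSn m)).
Qed.

Section Hit.
Variable m : nat.
Hypotheses (m_ge2 : 2 <= m) (occ_m : occurs m).

Lemma maxlive_spec_extend p : gap_free m -> p < m -> m - p <= v -> occurs p ->
  maxlive_spec m.+1 (Posz (m + v - 1)).
Proof.
move=> gap lt_pm near_p occ_p; apply: MaxliveLast => //; last by move=> i; lia.
  by apply: gap_freeS => // _; exists p; rewrite ?near_p.
by rewrite m_ge2 ltnSn.
Qed.

Lemma maxlive_spec_gap :
  (forall p, p < m -> occurs p -> v < m - p) -> maxlive_spec m.+1 (-1).
Proof.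
move=> far; apply: MaxliveDead => /(_ m) [|//|p lt_pm /andP [near_p occ_p]]; first lia.
by have := far p lt_pm occ_p; lia.
Qed.

Lemma maxlive_spec_hit s : maxlive_spec m s -> maxlive_spec m.+1 (maxlive_update m v s).
Proof.
rewrite /maxlive_update /extends_live.
case=> [gap Nocc|j gap j_range occ_j Nocc|Ngap].
- rewrite eqxx lez_nat /=; case: ifP => reach.
    by apply: (maxlive_spec_extend (p := 1)) => //; lia.
  apply: maxlive_spec_gap => p lt_pm occ_p.
  have [p_lt2|p_ge2] := ltnP p 2.
    have p1 : p = 1 by have := occurs_gt0 occ_p; lia.
    by move: reach; rewrite p1; lia.
  by rewrite (negbTE (Nocc p _)) in occ_p; lia.
- have -> : (Posz (j + v - 1) == 0) = false by apply/eqP => -[]; lia.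
  rewrite lez_nat /=; case: ifP => reach.
    by apply: (maxlive_spec_extend (p := j)) => //; lia.
  apply: maxlive_spec_gap => p lt_pm occ_p; have [lt_jp|le_pj] := ltnP j p.
    by rewrite (negbTE (Nocc p _)) in occ_p; lia.
  by move: reach; lia.
- by apply: MaxliveDead => /(gap_free_le (leqnSn m)).
Qed.

End Hit.

Lemma maxlive_fold_spec k : k < n ->
  maxlive_spec (2 + k) (maxlive_fold (prefix_table x) v (iota 2 k) 0).
Proof.
elim: k => [|k IH] lt_kn.
  by apply: MaxliveNone => i; lia.
rewrite -[k.+1]addn1 iotaD /maxlive_fold foldl_cat -/(maxlive_fold _ _ _ _) /= addn1 addnS.
rewrite /maxlive_step nth_prefix_table; last by lia.
have := IH (ltnW lt_kn); case: ifP => le_v.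
  by apply: maxlive_spec_hit; rewrite // /occurs le_v andbT; lia.
by apply: maxlive_spec_miss; rewrite /occurs le_v andbF.
Qed.

Lemma maxlive_fold_final : 0 < n ->
  maxlive_fold (prefix_table x) v (iota 2 n.-1) 0 = Posz n <->
  gap_free n.+1 /\ suffix_occurrence.
Proof.
move=> n_gt0; have := maxlive_fold_spec (k := n.-1) ltac:(lia).
rewrite (_ : 2 + n.-1 = n.+1); last by lia.
case=> [gap Nocc|j gap j_range occ_j Nocc|Ngap]; split.
- by case; lia.
- case=> _ [i i_ge2 [occ_i _]]; have [le_in _] := occurs_fits i_ge2 occ_i.
  by have := Nocc i ltac:(lia); rewrite occ_i.
- by case=> j_end; split=> //; exists j; lia.
- case=> _ [i i_ge2 [occ_i i_end]]; congr Posz.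
  have [le_in _] := occurs_fits i_ge2 occ_i.
  have [_ j_end] := occurs_fits (proj1 (andP j_range)) occ_j.
  have [lt_ji|le_ij] := ltnP j i; last by lia.
  by have := Nocc i ltac:(lia); rewrite occ_i.
- by [].
- by case.
Qed.

Lemma rooted_cover_of_gap_free : indeterminate x -> 0 < v ->
  gap_free n.+1 -> suffix_occurrence -> rooted_cover x v.
Proof.
move=> x_indet v_gt0 gap [i0 i0_ge2 [occ_i0 i0_end]]; split; first lia.
suff covered q : occurs q -> q + v - 1 <= n -> forall k, 1 <= k <= q + v - 1 ->
    exists p, [/\ 1 <= p, p <= k, k <= p + v - 1, p + v - 1 <= n & sub_match x p v].
  by move=> k k_range; apply: (covered i0); lia.
elim/ltn_ind: q => q IH occ_q q_end k k_range.
have q_gt0 := occurs_gt0 occ_q.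
have [le_qk|lt_kq] := leqP q k.
  by exists q; split; rewrite ?occurs_sub_match //; lia.
have [p lt_pq /andP [near_p occ_p]] := gap q ltac:(lia) occ_q.
by apply: (IH p) => //; lia.
Qed.

Lemma gap_free_of_rooted_cover : rooted_cover x v -> gap_free n.+1.
Proof.
case=> v_range cover i i_range occ_i.
have [p [p_ge1 le_pi le_ip p_end match_p]] := cover i.-1 ltac:(lia).
exists p; first lia.
rewrite /occurs; move: le_ip; case: (eqVneq p 1) => [->|p_neq1] le_ip /=.
  by rewrite andbT; lia.
by rewrite leq_pi_entry ?match_p ?andbT; lia.
Qed.

Lemma suffix_occurrence_of_rooted_cover : rooted_cover x v -> suffix_occurrence.
Proof.
case=> v_range cover; have [p [p_ge1 le_pn le_np p_end match_p]] := cover n ltac:(lia).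
exists p; first lia.
by rewrite /occurs leq_pi_entry ?match_p ?andbT ?orbT; [split|..]; lia.
Qed.

Lemma rooted_cover_iff : indeterminate x -> 0 < v ->
  rooted_cover x v <-> gap_free n.+1 /\ suffix_occurrence.
Proof.
move=> x_indet v_gt0; split=> [cover|[]]; last exact: rooted_cover_of_gap_free.
by split; [exact: gap_free_of_rooted_cover|exact: suffix_occurrence_of_rooted_cover].
Qed.

Lemma mem_candidates_prefix_table : 0 < v ->
  v \in pc_candidates (prefix_table x) <-> suffix_occurrence.
Proof.
move=> v_gt0; rewrite mem_pc_candidates size_prefix_table; split.
  case=> i i_range; rewrite nth_prefix_table; last by lia.
  by case=> pi_gt0 pi_end vE; exists i; rewrite /occurs -?vE ?leqnn ?andbT ?orbT; lia.
case=> i i_ge2 [occ_i i_end]; have [le_in _] := occurs_fits i_ge2 occ_i.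
have i_range : 2 <= i <= n by lia.
have pi_i : pi_entry x i = v.
  have := leq_pi_entry (pi_entry x i) i_range; rewrite leqnn => /esym /andP [le_pi _].
  move: occ_i; rewrite /occurs (_ : (i == 1) = false) ?i_range /=; lia.
exists i => //; rewrite nth_prefix_table ?pi_i; [split|]; lia.
Qed.

Lemma PCInd_accepts_iff : indeterminate x -> 0 < v ->
  [/\ 1 <= v <= n, v \in pc_candidates (prefix_table x)
    & maxlive_fold (prefix_table x) v (iota 2 n.-1) 0 = Posz n] <-> rooted_cover x v.
Proof.
move=> x_indet v_gt0; have coverP := rooted_cover_iff x_indet v_gt0.
have candP := mem_candidates_prefix_table v_gt0.
split=> [[v_range /candP suffix final]|cover].
  have n_gt0 : 0 < n by lia.
  exact: coverP.2 ((maxlive_fold_final n_gt0).1 final).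
have [gap [i i_ge2 [occ_i i_end]]] := coverP.1 cover.
split; [lia|by apply/candP; exists i|].
have n_gt0 : 0 < n by lia.
by apply: (maxlive_fold_final n_gt0).2; split=> //; exists i.
Qed.

End Occurrences.

End PrefixTable.

Theorem theorem2 :
  exists c : nat,
  forall (Sigma : finType) (x : seq {set Sigma}),
    indeterminate x ->
    [/\ (forall kappa : nat, kappa \in PCInd (prefix_table x) <-> rooted_cover x kappa),
        PCInd_time (prefix_table x) <= c * (size x) ^ 2 + c
      & PCInd_space (prefix_table x) <= c * size x + c].
Proof.
exists 7 => Sigma x x_indet.
have [memP time_bound space_bound] := PCInd_run_spec (prefix_table x).
rewrite /= size_prefix_table in memP time_bound space_bound.
split=> // kappa; apply: iff_trans (memP kappa) _.
case: kappa => [|kappa]; first by split=> -[].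
exact: PCInd_accepts_iff x_indet (ltn0Sn kappa).
Qed.
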